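(* Let $\eta=(\eta_{\alpha\beta})_{\alpha,\beta=1}^n$ be a constant symmetric invertible matrix with inverse $(\eta^{\alpha\beta})$, and let $F(t^1,\dots,t^n)$ satisfy the associativity equations $$\frac{\partial^3 F}{\partial t^\alpha\partial t^\beta\partial t^\lambda}\eta^{\lambda\mu}\frac{\partial^3 F}{\partial t^\gamma\partial t^\delta\partial t^\mu}=\frac{\partial^3 F}{\partial t^\gamma\partial t^\beta\partial t^\lambda}\eta^{\lambda\mu}\frac{\partial^3 F}{\partial t^\alpha\partial t^\delta\partial t^\mu}\quad\text{for all }\alpha,\beta,\gamma,\delta.$$ Define $$\widetilde F(t^0,t^1,\dots,t^n,t^{n+1})=\frac12\left(\eta_{\alpha\beta}t^\alpha t^\beta t^0+(t^0)^2t^{n+1}\right)+F(t^1,\dots,t^n)$$ and the $(n+2)\times(n+2)$ matrix (indices $0,1,\dots,n,n+1$) $$\widetilde\eta=\begin{pmatrix}0&0&1\\0&\eta&0\\1&0&0\end{pmatrix}.$$ Then $\widetilde F$ satisfies the associativity equations in the variables $t^0,\dots,t^{n+1}$ with $\eta$ replaced by $\widetilde\eta$ (and $\eta^{\lambda\mu}$ by the entries $\widetilde\eta^{kl}$ of $\widetilde\eta^{-1}$); the algebra with basis $e_0,\dots,e_{n+1}$ and multiplication $e_i\cdot e_j=c^k_{ij}e_k$, $c^k_{ij}=\widetilde\eta^{kl}\frac{\partial^3\widetilde F}{\partial t^l\partial t^i\partial t^j}$, is associative, has unity $e_0$ (i.e. $e_0\cdot e_k=e_k$ for all $k=0,\dots,n+1$),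 and $e_{n+1}^2=0$. Moreover, if $F$ is quasihomogeneous, i.e. $F(\lambda^{d_1}t^1,\dots,\lambda^{d_n}t^n)=\lambda^{d_F}F(t^1,\dots,t^n)$, and there is a constant $c$ with $d_\alpha+d_\beta=c$ for all $\alpha,\beta$ such that $\eta_{\alpha\beta}\neq0$, then $\widetilde F$ is quasihomogeneous with the same $d_F$, the same $d_1,\dots,d_n$, and $d_0=d_F-c$, $d_{n+1}=2c-d_F$.
   Context: Summation over repeated indices is understood. Quasihomogeneity of a function $G(t^0,\dots,t^{n+1})$ with exponents $d_0,\dots,d_{n+1}$ and degree $d_G$ means $G(\lambda^{d_0}t^0,\dots,\lambda^{d_{n+1}}t^{n+1})=\lambda^{d_G}G(t^0,\dots,t^{n+1})$. *)

From HB Require Import structures.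
From mathcomp Require Import all_boot all_order all_algebra.
From mathcomp Require Import all_classical all_reals all_analysis.
Set Implicit Arguments. Unset Strict Implicit. Unset Printing Implicit Defensive.
Import Order.TTheory GRing.Theory Num.Theory.
Import numFieldNormedType.Exports.
Local Open Scope ring_scope.

Section Defs.
Variable R : realType.

Definition pd (m : nat) (i : 'I_m) (G : 'rV[R]_m -> R) : 'rV[R]_m -> R :=
  fun x => derive G x (delta_mx 0 i).

Definition pd3 (m : nat) (a b c : 'I_m) (G : 'rV[R]_m -> R) : 'rV[R]_m -> R :=
  pd a (pd b (pd c G)).

Definition assoc_eqs (m : nat) (g : 'M[R]_m) (G : 'rV[R]_m -> R) : Prop :=
  forall (x : 'rV[R]_m) (a b c d : 'I_m),
    \sum_(l < m) \sum_(k < m) pd3 a b l G x * (invmx g) l k * pd3 c d k G x =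
    \sum_(l < m) \sum_(k < m) pd3 c b l G x * (invmx g) l k * pd3 a d k G x.

Definition quasihom (m : nat) (G : 'rV[R]_m -> R) (d : 'I_m -> R) (dG : R) : Prop :=
  forall (lam : R) (x : 'rV[R]_m), 0 < lam ->
    G (\row_i (lam `^ d i * x 0 i)) = lam `^ dG * G x.

(* indices 0, 1..n, n+1 of the extended space *)
Definition i0 (n : nat) : 'I_n.+2 := ord0.
Definition iN (n : nat) : 'I_n.+2 := ord_max.
Definition iL (n : nat) (a : 'I_n) : 'I_n.+2 := lift ord0 (widen_ord (leqnSn n) a).
Definition cls (n : nat) (k : 'I_n.+2) : option 'I_n := [pick a : 'I_n | iL a == k].

Definition proj_mid (n : nat) (t : 'rV[R]_n.+2) : 'rV[R]_n := \row_a t 0 (iL a).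

Definition Ftilde (n : nat) (eta : 'M[R]_n) (F : 'rV[R]_n -> R) (t : 'rV[R]_n.+2) : R :=
  2^-1 * (\sum_(a < n) \sum_(b < n) eta a b * t 0 (iL a) * t 0 (iL b) * t 0 (i0 n)
          + t 0 (i0 n) ^+ 2 * t 0 (iN n))
  + F (proj_mid t).

(* eta tilde = [[0,0,1],[0,eta,0],[1,0,0]] *)
Definition etatilde (n : nat) (eta : 'M[R]_n) : 'M[R]_n.+2 :=
  \matrix_(k, l)
    match cls k, cls l with
    | Some a, Some b => eta a b
    | None, None => if ((k == i0 n) && (l == iN n)) || ((k == iN n) && (l == i0 n))
                    then 1 else 0
    | _, _ => 0
    end.

Definition cstr (n : nat) (eta : 'M[R]_n) (F : 'rV[R]_n -> R)
    (x : 'rV[R]_n.+2) (k i j : 'I_n.+2) : R :=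
  \sum_(l < n.+2) (invmx (etatilde eta)) k l * pd3 l i j (Ftilde eta F) x.

End Defs.

(* Write Ftilde t = C(t,t,t)/6 + F(t^1,...,t^n), where C is the symmetric trilinear
   form polarizing the cubic part.  The third derivatives T of Ftilde are then
   T_0bl = etatilde_bl, T_(n+1)bl = 0 for b <> 0, T_ab0 = eta_ab, T_ab(n+1) = 0 and
   T_abc = F_abc; they are symmetric because F_abc is (Schwarz, proved from the mean
   value theorem applied to second difference quotients).  As etatilde^-1 is
   etatilde (eta^-1), an associativity equation with an index 0 reduces to the
   symmetry of T, one with an index n+1 but no 0 has both sides zero, and the others
   are those of F.  Associativity of the algebra is a rearrangement of these
   equations, e_0 is the unit since T_0bl = etatilde_bl, and e_(n+1)^2 = 0 since
   T_(n+1)(n+1)l = 0.  Each monomial of the cubic part has degree d_F: e.g.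
   eta_ab t^a t^b t^0 has degree d_a + d_b + d_F - c = d_F whenever eta_ab <> 0. *)

From HB Require Import structures.
From mathcomp Require Import all_boot all_order all_algebra.
From mathcomp Require Import all_classical all_reals all_analysis.
From mathcomp Require Import ring lra zify.
Set Implicit Arguments. Unset Strict Implicit. Unset Printing Implicit Defensive.
Import Order.TTheory GRing.Theory Num.Theory.
Import numFieldNormedType.Exports.
Local Open Scope ring_scope.

Section ExtendedIndices.
Variable n : nat.

Variant ext_index_spec : 'I_n.+2 -> Type :=
  | ExtIndex0 : ext_index_spec (i0 n)
  | ExtIndexN : ext_index_spec (iN n)
  | ExtIndexMid a : ext_index_spec (iL a).

Lemma ext_indexP k : ext_index_spec k.
Proof.
case: k => -[|m] lt_m.
  by rewrite (_ : Ordinal _ = i0 n); [constructor | exact: val_inj].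
have [lt_mn|ge_mn] := ltnP m n.
  by rewrite (_ : Ordinal _ = iL (Ordinal lt_mn)); [constructor | exact: val_inj].
rewrite (_ : Ordinal _ = iN n); first by constructor.
by apply: val_inj => /=; lia.
Qed.

Lemma ext_index_mid k : k != i0 n -> k != iN n -> exists a, k = iL a.
Proof. by case: (ext_indexP k) => [||a]; rewrite ?eqxx // => _ _; exists a. Qed.

Lemma iL_inj : injective (@iL n).
Proof. by move=> a b /(congr1 val) [] /val_inj. Qed.

Lemma iL_eq_iN (a : 'I_n) : (iL a == iN n) = false.
Proof. by apply/negbTE; rewrite -val_eqE /= eqSS neq_ltn ltn_ord. Qed.

Lemma iN_eq_iL (a : 'I_n) : (iN n == iL a) = false.
Proof. by rewrite eq_sym iL_eq_iN. Qed.

Lemma iL_eq_i0 (a : 'I_n) : (iL a == i0 n) = false. Proof. by []. Qed.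
Lemma i0_eq_iL (a : 'I_n) : (i0 n == iL a) = false. Proof. by []. Qed.
Lemma i0_eq_iN : (i0 n == iN n) = false. Proof. by []. Qed.
Lemma iN_eq_i0 : (iN n == i0 n) = false. Proof. by []. Qed.

Lemma cls_iL (a : 'I_n) : cls (iL a) = Some a.
Proof. by rewrite /cls; case: pickP => [b /eqP/iL_inj -> | /(_ a)]; rewrite ?eqxx. Qed.

Lemma cls_i0 : cls (i0 n) = None.
Proof. by rewrite /cls; case: pickP => // b; rewrite iL_eq_i0. Qed.

Lemma cls_iN : cls (iN n) = None.
Proof. by rewrite /cls; case: pickP => // b; rewrite iL_eq_iN. Qed.

Definition ext_indexE := (cls_i0, cls_iN, cls_iL, inj_eq iL_inj, iL_eq_i0, i0_eq_iL,
  iL_eq_iN, iN_eq_iL, i0_eq_iN, iN_eq_i0, eqxx).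

Lemma sum_ext_ord (V : nmodType) (f : 'I_n.+2 -> V) :
  \sum_(k < n.+2) f k = f (i0 n) + \sum_(a < n) f (iL a) + f (iN n).
Proof.
by rewrite big_ord_recl big_ord_recr addrA; congr (_ + _ + f _); apply: val_inj.
Qed.

End ExtendedIndices.

Section DirectionalDerivatives.
Variables (R : realType) (V : normedModType R).
Local Open Scope classical_set_scope.

Lemma is_derive_cubic_expansion (f : V -> R) x v (c d e : R) :
  (forall h : R, f (h *: v + x) = f x + h * c + h ^+ 2 * d + h ^+ 3 * e) ->
  is_derive x v f c.
Proof.
move=> f_cubic.
have quot_cvg : (fun h : R => h^-1 *: ((f \o shift x) (h *: v) - f x)) @ 0^' --> c.
  have : (fun h : R => c + h * d + h * h * e) @ 0^' --> c.
    have cont : {for 0, continuous (fun h : R => c + h * d + h * h * e)}.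
      apply: continuousD; [apply: continuousD|].
      - exact: cvg_cst.
      - by apply: continuousM; [exact: cvg_id|exact: cvg_cst].
      - by apply: continuousM; [apply: continuousM; exact: cvg_id|exact: cvg_cst].
    by have := (continuous_withinNx _ _).1 cont; rewrite /= !mul0r !addr0.
  apply: cvg_trans; apply: near_eq_cvg; near=> h.
  have h_neq0 : h != 0 by near: h; exact: nbhs_dnbhs_neq.
  rewrite /= f_cubic /shift; apply/(mulfI h_neq0).
  rewrite [in RHS]/GRing.scale /= mulrA mulfV // mul1r; ring.
by split; [apply/cvg_ex; exists c | exact: cvg_lim].
Unshelve. all: by end_near. Qed.

Section LinearChange.
Variables (W : normedModType R) (L : {linear V -> W}) (G : W -> R).

Let quotient_comp x v :
  (fun h : R => h^-1 *: ((G \o L \o shift x) (h *: v) - G (L x))) =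
  (fun h : R => h^-1 *: ((G \o shift (L x)) (h *: L v) - G (L x))).
Proof. by apply: funext => h; rewrite /= /shift linearP. Qed.

Lemma derive_linear_comp x v : 'D_v (G \o L) x = 'D_(L v) G (L x).
Proof. by rewrite /derive quotient_comp. Qed.

Lemma derivable_linear_comp x v :
  derivable G (L x) (L v) -> derivable (G \o L) x v.
Proof. by rewrite /derivable quotient_comp. Qed.

End LinearChange.

End DirectionalDerivatives.

Section SymmetryOfSecondDerivatives.
Variables (R : realType) (V : normedModType R).
Local Open Scope classical_set_scope.

Lemma is_derive_along_line (G : V -> R) y u s :
  derivable G (s *: u + y) u ->
  is_derive s 1 (fun s : R => G (s *: u + y)) ('D_u G (s *: u + y)).
Proof.
have quot_eq : (fun h : R => h^-1 *: (((fun s => G (s *: u + y)) \o shift s) (h *: 1)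
                                        - G (s *: u + y)))
  = (fun h : R => h^-1 *: ((G \o shift (s *: u + y)) (h *: u) - G (s *: u + y))).
  by apply: funext => h; rewrite /= /shift [h *: 1]mulr1 scalerDl addrA.
by move=> DG; split; rewrite /derivable /derive quot_eq.
Qed.

Lemma differentiable_remainder (f : V -> R) x : differentiable f x ->
  forall eps : R, 0 < eps -> exists2 del : R, 0 < del &
    forall z : V, `|z| < del -> `|f (z + x) - f x - 'd f x z| <= eps * `|z|.
Proof.
move=> /diff_locally /eqaddoP small eps eps_gt0.
have /nbhs_norm0P [del del_gt0 near_del] := small eps eps_gt0.
by exists del => // z /near_del; rewrite /= opprD addrA.
Qed.

Definition second_difference (G : V -> R) x u w (h : R) :=
  G (x + h *: u + h *: w) - G (x + h *: u) - G (x + h *: w) + G x.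

Lemma second_differenceC G x u w :
  second_difference G x u w = second_difference G x w u.
Proof. by apply: funext => h; rewrite /second_difference [x + h *: u + _]addrAC; ring. Qed.

Lemma second_difference_mvt (G : V -> R) x u w h :
  (forall y, differentiable G y) -> 0 < h ->
  exists2 c, 0 < c < h & second_difference G x u w h =
    h * ('D_u G (c *: u + (x + h *: w)) - 'D_u G (c *: u + x)).
Proof.
move=> G_diff h_gt0.
pose phi s := G (s *: u + (x + h *: w)) - G (s *: u + x).
have phi_derive (s : R) :
    is_derive s 1 phi ('D_u G (s *: u + (x + h *: w)) - 'D_u G (s *: u + x)).
  by apply: is_deriveB; apply: is_derive_along_line; exact: diff_derivable.
have phi_cont : {within `[0, h], continuous phi}.
  apply: continuous_subspaceT => s; apply: differentiable_continuous.
  by apply/derivable1_diffP; case: (phi_derive s).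
have [c] := MVT h_gt0 (fun s _ => phi_derive s) phi_cont.
rewrite in_itv /= subr0 => c_in phi_incr; exists c => //.
rewrite mulrC -phi_incr /phi !scale0r !add0r /second_difference.
rewrite [x + h *: u + _]addrAC (addrC (h *: u) (x + _)) (addrC (h *: u) x); ring.
Qed.

Lemma second_difference_approx (G : V -> R) x u w (eps : R) :
  (forall y, differentiable G y) -> differentiable ('D_u G) x -> 0 < eps ->
  \forall h \near 0^'+, `|second_difference G x u w h - h ^+ 2 * 'd ('D_u G) x w|
                          <= eps * h ^+ 2 * (2 * `|u| + `|w|).
Proof.
move=> G_diff DG_diff eps_gt0; set L := 'd ('D_u G) x.
have [del del_gt0 rem_le] := differentiable_remainder DG_diff eps_gt0.
have K_gt0 : 0 < `|u| + `|w| + 1 by rewrite ltr_wpDl ?addr_ge0.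
near=> h.
have h_gt0 : 0 < h by near: h; exact: nbhs_right_gt.
have hK_lt : h * (`|u| + `|w| + 1) < del.
  by rewrite -ltr_pdivlMr //; near: h; apply: nbhs_right_lt; exact: divr_gt0.
have [c /andP [c_gt0 c_lt_h] ->] := second_difference_mvt x u w G_diff h_gt0.
set z1 := c *: u + h *: w; set z2 := c *: u.
have z1_le : `|z1| <= h * `|u| + h * `|w|.
  rewrite (le_trans (ler_normD _ _)) // !normrZ !gtr0_norm // lerD2r.
  by rewrite ler_wpM2r // ltW.
have z2_le : `|z2| <= h * `|u| by rewrite normrZ gtr0_norm // ler_wpM2r // ltW.
have /rem_le rem1 : `|z1| < del.
  by apply: le_lt_trans hK_lt; rewrite !mulrDr mulr1; lra.
have /rem_le rem2 : `|z2| < del.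
  by apply: le_lt_trans hK_lt; rewrite !mulrDr mulr1; have := normr_ge0 w; nra.
have -> : h * ('D_u G (c *: u + (x + h *: w)) - 'D_u G (c *: u + x)) - h ^+ 2 * L w =
    h * (('D_u G (z1 + x) - 'D_u G x - L z1) - ('D_u G (z2 + x) - 'D_u G x - L z2)).
  have -> : L z1 = L z2 + h * L w by rewrite /z1 linearD !linearZ.
  by rewrite /z1 -(addrA (c *: u)) (addrC (h *: w) x); ring.
rewrite normrM gtr0_norm // expr2 -!mulrA mulrCA ler_pM2l //.
apply: le_trans (ler_normB _ _) _.
have := ler_wpM2l (ltW eps_gt0) z1_le; have := ler_wpM2l (ltW eps_gt0) z2_le.
lra.
Unshelve. all: by end_near. Qed.

Lemma second_difference_cvg (G : V -> R) x u w :
  (forall y, differentiable G y) -> differentiable ('D_u G) x ->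
  (fun h => h ^- 2 * second_difference G x u w h) @ 0^'+ --> 'D_w ('D_u G) x.
Proof.
move=> G_diff DG_diff; rewrite deriveE //; set L := 'd ('D_u G) x w.
apply/cvgrPdist_le => eps eps_gt0.
set K := 2 * `|u| + `|w| + 1.
have K_gt0 : 0 < K by rewrite ltr_wpDl ?addr_ge0 ?mulr_ge0.
have eps_frac_le : eps / K * (2 * `|u| + `|w|) <= eps.
  by rewrite mulrAC ler_pdivrMr // ler_pM2l // /K lerDl.
near=> h.
have h_gt0 : 0 < h by near: h; exact: nbhs_right_gt.
have approx : `|second_difference G x u w h - h ^+ 2 * L|
                <= eps / K * h ^+ 2 * (2 * `|u| + `|w|).
  by near: h; apply: second_difference_approx => //; exact: divr_gt0.
have -> : L - h ^- 2 * second_difference G x u w h =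
          - ((second_difference G x u w h - h ^+ 2 * L) / h ^+ 2).
  by field; exact: lt0r_neq0.
have h2_gt0 : 0 < h ^+ 2 by rewrite exprn_gt0.
rewrite normrN normrM [`|_^-1|]gtr0_norm ?invr_gt0 // ler_pdivrMr //.
by apply: le_trans approx _; rewrite mulrAC ler_wpM2r // ltW.
Unshelve. all: by end_near. Qed.

Lemma derive_comm (G : V -> R) x u w :
  (forall y, differentiable G y) ->
  differentiable ('D_u G) x -> differentiable ('D_w G) x ->
  'D_w ('D_u G) x = 'D_u ('D_w G) x.
Proof.
move=> G_diff DuG_diff DwG_diff.
have := @second_difference_cvg G x u w G_diff DuG_diff.
rewrite second_differenceC => cvg_uw.
have cvg_wu := @second_difference_cvg G x w u G_diff DwG_diff.
exact: (cvg_unique _ cvg_uw cvg_wu).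
Qed.

End SymmetryOfSecondDerivatives.

Lemma proj_mid_is_linear (R : realType) n : linear (@proj_mid R n).
Proof. by move=> a u v; apply/matrixP => i j; rewrite !mxE. Qed.

HB.instance Definition _ (R : realType) n :=
  GRing.isLinear.Build R _ _ _ (@proj_mid R n) (@proj_mid_is_linear R n).

Section CubicForm.
Variables (R : realType) (n : nat) (eta : 'M[R]_n).
Hypothesis eta_sym : eta^T = eta.

Local Notation e k := (delta_mx 0 k : 'rV[R]_n.+2).

Lemma proj_mid_delta k :
  proj_mid (e k) = if cls k is Some a then delta_mx 0 a else 0.
Proof.
case: (ext_indexP k) => [||a]; rewrite ?ext_indexE; apply/matrixP => i j.
all: by rewrite !mxE ?ext_indexE //= ord1.
Qed.

Definition eta_form (u w : 'rV[R]_n.+2) : R := (proj_mid u *m eta *m (proj_mid w)^T) 0 0.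

Lemma eta_formDl h u t w : eta_form (h *: u + t) w = h * eta_form u w + eta_form t w.
Proof. by rewrite /eta_form linearP mulmxDl -scalemxAl mulmxDl -scalemxAl !mxE. Qed.

Lemma eta_formDr h u t w : eta_form w (h *: u + t) = h * eta_form w u + eta_form w t.
Proof. by rewrite /eta_form linearP linearP mulmxDr -scalemxAr !mxE. Qed.

Lemma eta_formC u w : eta_form u w = eta_form w u.
Proof.
transitivity ((proj_mid u *m eta *m (proj_mid w)^T)^T 0 0); first by rewrite mxE.
by rewrite !trmx_mul trmxK eta_sym mulmxA.
Qed.

Lemma eta_form_delta i j :
  eta_form (e i) (e j) = if (cls i, cls j) is (Some a, Some b) then eta a b else 0.
Proof.
rewrite /eta_form !proj_mid_delta.
case: (cls i) => [a|]; case: (cls j) => [b|]; rewrite ?mul0mx ?trmx0 ?mulmx0.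
  by rewrite trmx_delta -rowE -colE !mxE.
all: by rewrite mxE.
Qed.

Lemma eta_form_diag t :
  eta_form t t = \sum_a \sum_b eta a b * t 0 (iL a) * t 0 (iL b).
Proof.
rewrite /eta_form mxE exchange_big; apply: eq_bigr => a _.
rewrite mxE big_distrl /=; apply: eq_bigr => b _.
rewrite !mxE; ring.
Qed.

Definition cubic_form (u v w : 'rV[R]_n.+2) : R :=
  eta_form u v * w 0 (i0 n) + eta_form v w * u 0 (i0 n) + eta_form w u * v 0 (i0 n)
  + u 0 (i0 n) * v 0 (i0 n) * w 0 (iN n) + v 0 (i0 n) * w 0 (i0 n) * u 0 (iN n)
  + w 0 (i0 n) * u 0 (i0 n) * v 0 (iN n).

Lemma cubic_form_sym12 u v w : cubic_form u v w = cubic_form v u w.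
Proof. by rewrite /cubic_form (eta_formC v u) (eta_formC u w) (eta_formC w v); ring. Qed.

Lemma cubic_form_sym23 u v w : cubic_form u v w = cubic_form u w v.
Proof. by rewrite /cubic_form (eta_formC v u) (eta_formC u w) (eta_formC w v); ring. Qed.

Lemma FtildeE (F : 'rV[R]_n -> R) :
  Ftilde eta F = fun t => cubic_form t t t / 6 + F (proj_mid t).
Proof.
apply: funext => t; rewrite /Ftilde /cubic_form.
have -> : \sum_a \sum_b eta a b * t 0 (iL a) * t 0 (iL b) * t 0 (i0 n) =
          eta_form t t * t 0 (i0 n).
  by rewrite eta_form_diag big_distrl; apply: eq_bigr => a _; rewrite big_distrl.
by field.
Qed.

Lemma is_derive_cubic_form_diag t v :
  is_derive t v (fun t => cubic_form t t t / 6) (cubic_form v t t / 2).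
Proof.
apply: (is_derive_cubic_expansion (d := cubic_form v v t / 2)
                                  (e := cubic_form v v v / 6)) => h.
by rewrite /cubic_form !(eta_formDl, eta_formDr) (eta_formC t v) !mxE; field.
Qed.

Lemma is_derive_cubic_form_sq w t v :
  is_derive t v (fun t => cubic_form w t t / 2) (cubic_form w v t).
Proof.
apply: (is_derive_cubic_expansion (d := cubic_form w v v / 2) (e := 0)) => h.
rewrite /cubic_form !(eta_formDl, eta_formDr) (eta_formC t v) (eta_formC v w) (eta_formC t w).
by rewrite !mxE; field.
Qed.

Lemma is_derive_cubic_form_lin u w t v :
  is_derive t v (cubic_form u w) (cubic_form u w v).
Proof.
apply: (is_derive_cubic_expansion (d := 0) (e := 0)) => h.
rewrite /cubic_form !(eta_formDl, eta_formDr) !mxE; ring.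
Qed.

End CubicForm.

Section ExtendedMetric.
Variables (R : realType) (n : nat).

Lemma sum_etatilde_i0 (A : 'M[R]_n) (w : 'I_n.+2 -> R) :
  \sum_k etatilde A (i0 n) k * w k = w (iN n).
Proof.
rewrite sum_ext_ord big1 => [|a _]; rewrite !mxE !ext_indexE /=.
all: by rewrite ?(mul0r, mul1r, add0r, addr0).
Qed.

Lemma sum_etatilde_iN (A : 'M[R]_n) (w : 'I_n.+2 -> R) :
  \sum_k etatilde A (iN n) k * w k = w (i0 n).
Proof.
rewrite sum_ext_ord big1 => [|a _]; rewrite !mxE !ext_indexE /=.
all: by rewrite ?(mul0r, mul1r, add0r, addr0).
Qed.

Lemma sum_etatilde_mid (A : 'M[R]_n) a (w : 'I_n.+2 -> R) :
  \sum_k etatilde A (iL a) k * w k = \sum_b A a b * w (iL b).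
Proof.
rewrite sum_ext_ord !mxE !ext_indexE /= !mul0r add0r addr0.
by apply: eq_bigr => b _; rewrite mxE !ext_indexE.
Qed.

Lemma mul_etatilde (A B : 'M[R]_n) :
  A *m B = 1%:M -> etatilde A *m etatilde B = 1%:M.
Proof.
move=> AB; apply/matrixP => k l; rewrite !mxE.
case: (ext_indexP k) => [||a];
  rewrite ?sum_etatilde_i0 ?sum_etatilde_iN ?sum_etatilde_mid.
- by case: (ext_indexP l) => [||b]; rewrite !mxE !ext_indexE.
- by case: (ext_indexP l) => [||b]; rewrite !mxE !ext_indexE.
case: (ext_indexP l) => [||b].
- by rewrite big1 ?ext_indexE // => c _; rewrite !mxE !ext_indexE mulr0.
- by rewrite big1 ?ext_indexE // => c _; rewrite !mxE !ext_indexE mulr0.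
have /matrixP/(_ a b) := AB; rewrite !mxE !ext_indexE => <-.
by apply: eq_bigr => c _; rewrite !mxE !ext_indexE.
Qed.

Lemma invmx_etatilde (A : 'M[R]_n) :
  A \in unitmx -> invmx (etatilde A) = etatilde (invmx A).
Proof.
move=> A_unit; have inv_mul := mul_etatilde (mulVmx A_unit).
by rewrite -[LHS]mul1mx -inv_mul mulmxK // (mulmx1_unit inv_mul).2.
Qed.

Lemma etatilde_tr (A : 'M[R]_n) : (etatilde A)^T = etatilde A^T.
Proof.
apply/matrixP => k l; rewrite !mxE.
by case: (ext_indexP k) => [||a]; case: (ext_indexP l) => [||b]; rewrite !ext_indexE ?mxE.
Qed.

Lemma etatilde_sym (A : 'M[R]_n) : A^T = A -> (etatilde A)^T = etatilde A.
Proof. by rewrite etatilde_tr => ->. Qed.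

Lemma etatilde_unit (A : 'M[R]_n) : A \in unitmx -> etatilde A \in unitmx.
Proof. by move=> A_unit; exact: (mulmx1_unit (mul_etatilde (mulVmx A_unit))).2. Qed.

End ExtendedMetric.

Section WDVVAlgebra.
Variables (R : comUnitRingType) (m : nat) (g : 'M[R]_m) (T : 'I_m -> 'I_m -> 'I_m -> R).
Hypothesis g_sym : g^T = g.
Hypothesis g_unit : g \in unitmx.
Hypothesis T_sym12 : forall a b c, T a b c = T b a c.
Hypothesis T_sym23 : forall a b c, T a b c = T a c b.

Definition wdvv_form a b c d := \sum_(l < m) \sum_(k < m) T a b l * invmx g l k * T c d k.

Definition structure_const k i j := \sum_(l < m) invmx g k l * T l i j.

Lemma invmx_sym l k : invmx g l k = invmx g k l.
Proof. by rewrite -[in LHS]g_sym -trmx_inv mxE. Qed.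

Lemma wdvv_form_sym12 a b c d : wdvv_form a b c d = wdvv_form b a c d.
Proof. by apply: eq_bigr => l _; apply: eq_bigr => k _; rewrite T_sym12. Qed.

Lemma wdvv_formC a b c d : wdvv_form a b c d = wdvv_form c d a b.
Proof.
rewrite /wdvv_form exchange_big; apply: eq_bigr => l _; apply: eq_bigr => k _.
by rewrite [invmx g _ _ in LHS]invmx_sym; ring.
Qed.

Lemma wdvv_form_unit e : (forall b l, T e b l = g b l) ->
  forall b c d, wdvv_form e b c d = T c d b.
Proof.
move=> T_unit b c d; rewrite /wdvv_form exchange_big /=.
have row_delta k : \sum_l T e b l * invmx g l k = (b == k)%:R.
  have /matrixP/(_ b k) := mulmxV g_unit; rewrite !mxE => <-.
  by apply: eq_bigr => l _; rewrite T_unit.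
under eq_bigr => k _ do rewrite -big_distrl /= row_delta.
rewrite (bigD1 b) //= eqxx mul1r big1 ?addr0 // => k /negbTE k_neq_b.
by rewrite eq_sym k_neq_b mul0r.
Qed.

Lemma wdvv_form_null z e : (forall b l, b != e -> T z b l = 0) ->
  forall b c d, b != e -> wdvv_form z b c d = 0.
Proof.
move=> T_null b c d b_neq_e.
by apply: big1 => l _; apply: big1 => k _; rewrite T_null // !mul0r.
Qed.

Lemma structure_const_unit e : (forall b l, T e b l = g b l) ->
  forall k j, structure_const k e j = if k == j then 1 else 0.
Proof.
move=> T_unit k j; rewrite (_ : (if k == j then 1 else 0) = (k == j)%:R); last by case: eqP.
have /matrixP/(_ k j) := mulVmx g_unit; rewrite !mxE => <-.
by apply: eq_bigr => l _; rewrite T_sym12 T_unit.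
Qed.

Lemma structure_const_mul i j k p :
  \sum_(q < m) structure_const q i j * structure_const p q k =
  \sum_(r < m) invmx g p r * wdvv_form i j k r.
Proof.
transitivity (\sum_q \sum_r \sum_l invmx g p r * (T i j l * invmx g l q * T k r q)).
  apply: eq_bigr => q _; rewrite big_distrlr exchange_big /=.
  apply: eq_bigr => r _; apply: eq_bigr => l _.
  rewrite (T_sym12 l) (T_sym23 i) (T_sym23 r) (T_sym12 r) (invmx_sym q); ring.
rewrite exchange_big /=; apply: eq_bigr => r _.
rewrite exchange_big /= /wdvv_form big_distrr /=; apply: eq_bigr => l _.
by rewrite big_distrr.
Qed.

Lemma structure_const_assoc :
  (forall a b c d, wdvv_form a b c d = wdvv_form c b a d) ->
  forall i j k p, \sum_(q < m) structure_const q i j * structure_const p q k =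
                  \sum_(q < m) structure_const q j k * structure_const p i q.
Proof.
move=> wdvv i j k p.
transitivity (\sum_q structure_const q j k * structure_const p q i).
  rewrite !structure_const_mul; apply: eq_bigr => r _; congr (_ * _).
  by rewrite wdvv_form_sym12 wdvv [RHS]wdvv [RHS]wdvv_form_sym12.
apply: eq_bigr => q _; congr (_ * _).
by apply: eq_bigr => l _; rewrite T_sym23.
Qed.

End WDVVAlgebra.

Section ExtendedWDVV.
Variables (R : realType) (n : nat) (eta : 'M[R]_n).
Variables (T : 'I_n.+2 -> 'I_n.+2 -> 'I_n.+2 -> R) (Tm : 'I_n -> 'I_n -> 'I_n -> R).
Hypothesis eta_sym : eta^T = eta.
Hypothesis eta_unit : eta \in unitmx.
Hypothesis T_sym12 : forall p m l, T p m l = T m p l.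
Hypothesis T_sym23 : forall p m l, T p m l = T p l m.
Hypothesis T_i0 : forall b l, T (i0 n) b l = etatilde eta b l.
Hypothesis T_iN : forall b l, b != i0 n -> T (iN n) b l = 0.
Hypothesis T_mid : forall a b l,
  T (iL a) (iL b) l = if cls l is Some c then Tm a b c else (l == i0 n)%:R * eta a b.

Lemma wdvv_form_etatilde_mid a b c d :
  wdvv_form (etatilde eta) T (iL a) (iL b) (iL c) (iL d) = wdvv_form eta Tm a b c d.
Proof.
rewrite /wdvv_form invmx_etatilde //.
transitivity (\sum_l T (iL a) (iL b) l *
                 \sum_k etatilde (invmx eta) l k * T (iL c) (iL d) k).
  by apply: eq_bigr => l _; rewrite big_distrr; apply: eq_bigr => k _; rewrite -mulrA.
rewrite sum_ext_ord sum_etatilde_i0 !T_mid !ext_indexE /= !mul0r mulr0 add0r addr0.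
apply: eq_bigr => e _; rewrite sum_etatilde_mid big_distrr /= T_mid cls_iL.
by apply: eq_bigr => f _; rewrite T_mid cls_iL mulrA.
Qed.

Lemma wdvv_etatilde :
  (forall a b c d, wdvv_form eta Tm a b c d = wdvv_form eta Tm c b a d) ->
  forall a b c d, wdvv_form (etatilde eta) T a b c d = wdvv_form (etatilde eta) T c b a d.
Proof.
have et_sym := etatilde_sym eta_sym; have et_unit := etatilde_unit eta_unit.
move=> wdvv_mid a b c d; set W := wdvv_form (etatilde eta) T.
have W12 p q r s : W p q r s = W q p r s by exact: wdvv_form_sym12.
have WC p q r s : W p q r s = W r s p q by exact: wdvv_formC.
have W0 q r s : W (i0 n) q r s = T r s q by exact: wdvv_form_unit.
have WN q r s : q != i0 n -> W (iN n) q r s = 0 by exact: wdvv_form_null.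
have [->|a0] := eqVneq a (i0 n); first by rewrite W0 WC W0 T_sym23.
have [->|b0] := eqVneq b (i0 n).
  by rewrite W12 W0 [RHS]W12 W0 T_sym12 T_sym23 T_sym12.
have [->|c0] := eqVneq c (i0 n); first by rewrite WC !W0 T_sym23.
have [->|d0] := eqVneq d (i0 n).
  by rewrite WC W12 W0 [RHS]WC [RHS]W12 W0 T_sym12 T_sym23 T_sym12.
have [->|aN] := eqVneq a (iN n); first by rewrite WN // WC WN.
have [->|cN] := eqVneq c (iN n); first by rewrite WN // WC WN.
have [->|bN] := eqVneq b (iN n); first by rewrite W12 WN // W12 WN.
have [->|dN] := eqVneq d (iN n); first by rewrite WC W12 WN // WC W12 WN.
have [a' ->] := ext_index_mid a0 aN; have [b' ->] := ext_index_mid b0 bN.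
have [c' ->] := ext_index_mid c0 cN; have [d' ->] := ext_index_mid d0 dN.
by rewrite /W !wdvv_form_etatilde_mid; apply: wdvv_mid.
Qed.

End ExtendedWDVV.

Section ThirdDerivativesOfFtilde.
Variables (R : realType) (n : nat).

Local Notation e k := (delta_mx 0 k : 'rV[R]_n.+2).

Lemma pd_comm m (G : 'rV[R]_m -> R) :
  (forall y, differentiable G y) -> (forall k y, differentiable (pd k G) y) ->
  forall i j, pd i (pd j G) = pd j (pd i G).
Proof.
move=> G_diff G_diff1 i j; apply: funext => x.
by apply: derive_comm; [| exact: (G_diff1 j x) | exact: (G_diff1 i x)].
Qed.

Lemma pd_cst0 m (a : 'I_m) : pd a (fun _ : 'rV[R]_m => 0) = fun _ => 0.
Proof. by apply: funext => x; exact: derive_cst. Qed.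

Definition pd_mid (k : 'I_n.+2) (G : 'rV[R]_n -> R) : 'rV[R]_n -> R :=
  if cls k is Some a then pd a G else fun _ => 0.

Lemma pd_mid_differentiable k (G : 'rV[R]_n -> R) :
  (forall a y, differentiable (pd a G) y) -> forall y, differentiable (pd_mid k G) y.
Proof. by rewrite /pd_mid; case: (cls k). Qed.

Lemma pd_add_comp_proj k (f df : 'rV[R]_n.+2 -> R) (G : 'rV[R]_n -> R) :
  (forall x, is_derive x (e k) f (df x)) -> (forall y, differentiable G y) ->
  pd k (fun x => f x + G (proj_mid x)) = fun x => df x + pd_mid k G (proj_mid x).
Proof.
move=> f_der G_diff; apply: funext => x.
have G_der : derivable (G \o @proj_mid R n) x (e k).
  by apply: derivable_linear_comp; exact: diff_derivable.
have f_der' : derivable f x (e k) by exact: ex_derive.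
rewrite /pd -[fun x => _]/(f + (G \o @proj_mid R n)) (deriveD f_der' G_der) derive_val.
rewrite derive_linear_comp /= proj_mid_delta /pd_mid.
by case: (cls k) => [a|]; rewrite ?derive0.
Qed.

Definition pd3_mid p m l (F : 'rV[R]_n -> R) := pd_mid p (pd_mid m (pd_mid l F)).

Lemma pd3_midE p m l F : pd3_mid p m l F =
  if (cls p, cls m, cls l) is (Some a, Some b, Some c) then pd3 a b c F else fun _ => 0.
Proof.
by rewrite /pd3_mid /pd_mid; case: (cls l) => [c|]; case: (cls m) => [b|];
  case: (cls p) => [a|]; rewrite ?pd_cst0.
Qed.

Variables (eta : 'M[R]_n) (F : 'rV[R]_n -> R).
Hypothesis eta_sym : eta^T = eta.
Hypothesis eta_unit : eta \in unitmx.
Hypothesis F_diff : forall x, differentiable F x.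
Hypothesis F_diff1 : forall (i : 'I_n) x, differentiable (pd i F) x.
Hypothesis F_diff2 : forall (i j : 'I_n) x, differentiable (pd i (pd j F)) x.

Lemma pd3_Ftilde p m l x :
  pd3 p m l (Ftilde eta F) x =
  cubic_form eta (e l) (e m) (e p) + pd3_mid p m l F (proj_mid x).
Proof.
have Ft1 : pd l (Ftilde eta F) =
           fun x => cubic_form eta (e l) x x / 2 + pd_mid l F (proj_mid x).
  by rewrite FtildeE; apply: pd_add_comp_proj => // y; exact: is_derive_cubic_form_diag.
have Ft2 : pd m (pd l (Ftilde eta F)) =
           fun x => cubic_form eta (e l) (e m) x + pd_mid m (pd_mid l F) (proj_mid x).
  rewrite Ft1; apply: pd_add_comp_proj; first by move=> y; exact: is_derive_cubic_form_sq.
  exact: pd_mid_differentiable.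
have Ft3 : pd p (pd m (pd l (Ftilde eta F))) =
           fun x => cubic_form eta (e l) (e m) (e p) + pd3_mid p m l F (proj_mid x).
  rewrite Ft2; apply: pd_add_comp_proj; first by move=> y; exact: is_derive_cubic_form_lin.
  apply: pd_mid_differentiable => a y; rewrite /pd_mid.
  by case: (cls l) => [c|]; rewrite ?pd_cst0.
by rewrite /pd3 Ft3.
Qed.

Lemma pd3_sym12 a b c : pd3 a b c F = pd3 b a c F.
Proof. by rewrite /pd3 (pd_comm (F_diff1 c) (F_diff2 ^~ c)). Qed.

Lemma pd3_sym23 a b c : pd3 a b c F = pd3 a c b F.
Proof. by rewrite /pd3 (pd_comm F_diff F_diff1 b c). Qed.

Lemma pd3_mid_sym12 p m l : pd3_mid p m l F = pd3_mid m p l F.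
Proof.
rewrite !pd3_midE.
case: (cls p) => [a|]; case: (cls m) => [b|]; case: (cls l) => [c|];
  first exact: pd3_sym12.
all: by [].
Qed.

Lemma pd3_mid_sym23 p m l : pd3_mid p m l F = pd3_mid p l m F.
Proof.
rewrite !pd3_midE.
case: (cls p) => [a|]; case: (cls m) => [b|]; case: (cls l) => [c|];
  first exact: pd3_sym23.
all: by [].
Qed.

Local Notation Ft := (Ftilde eta F).

Lemma pd3_Ftilde_sym12 x p m l : pd3 p m l Ft x = pd3 m p l Ft x.
Proof. by rewrite !pd3_Ftilde (cubic_form_sym23 eta_sym) pd3_mid_sym12. Qed.

Lemma pd3_Ftilde_sym23 x p m l : pd3 p m l Ft x = pd3 p l m Ft x.
Proof. by rewrite !pd3_Ftilde (cubic_form_sym12 eta_sym) pd3_mid_sym23. Qed.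

Lemma pd3_Ftilde_i0 x b l : pd3 (i0 n) b l Ft x = etatilde eta b l.
Proof.
rewrite pd3_Ftilde pd3_midE ext_indexE addr0 (cubic_form_sym12 eta_sym) /cubic_form.
rewrite !eta_form_delta !mxE.
by case: (ext_indexP b) => [||a]; case: (ext_indexP l) => [||c]; rewrite !ext_indexE /=; ring.
Qed.

Lemma pd3_Ftilde_iN x b l : b != i0 n -> pd3 (iN n) b l Ft x = 0.
Proof.
rewrite pd3_Ftilde pd3_midE ext_indexE addr0 (cubic_form_sym12 eta_sym) /cubic_form.
rewrite !eta_form_delta !mxE.
by case: (ext_indexP b) => [||a]; case: (ext_indexP l) => [||c];
  rewrite !ext_indexE //= => _; ring.
Qed.

Lemma pd3_Ftilde_mid x a b l : pd3 (iL a) (iL b) l Ft x =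
  if cls l is Some c then pd3 a b c F (proj_mid x) else (l == i0 n)%:R * eta a b.
Proof.
have eta_ba : eta b a = eta a b by rewrite -[in LHS]eta_sym mxE.
rewrite pd3_Ftilde pd3_midE !ext_indexE /cubic_form !eta_form_delta !mxE.
by case: (ext_indexP l) => [||c]; rewrite !ext_indexE /= ?eta_ba; ring.
Qed.

Lemma assoc_eqs_Ftilde : assoc_eqs eta F -> assoc_eqs (etatilde eta) Ft.
Proof.
move=> F_assoc x.
exact: wdvv_etatilde eta_sym eta_unit (pd3_Ftilde_sym12 x) (pd3_Ftilde_sym23 x)
  (pd3_Ftilde_i0 x) (pd3_Ftilde_iN x) (pd3_Ftilde_mid x) (F_assoc (proj_mid x)).
Qed.

Lemma cstr_assoc : assoc_eqs eta F -> forall x i j k p,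
  \sum_(q < n.+2) cstr eta F x q i j * cstr eta F x p q k =
  \sum_(q < n.+2) cstr eta F x q j k * cstr eta F x p i q.
Proof.
move=> F_assoc x.
exact: structure_const_assoc (etatilde_sym eta_sym) (pd3_Ftilde_sym12 x)
  (pd3_Ftilde_sym23 x) (assoc_eqs_Ftilde F_assoc x).
Qed.

Lemma cstr_unit x k j : cstr eta F x k (i0 n) j = if k == j then 1 else 0.
Proof.
by rewrite -(structure_const_unit (etatilde_unit eta_unit) (pd3_Ftilde_sym12 x)
                                  (pd3_Ftilde_i0 x)).
Qed.

Lemma cstr_iN_iN x k : cstr eta F x k (iN n) (iN n) = 0.
Proof.
by apply: big1 => l _; rewrite pd3_Ftilde_sym12 pd3_Ftilde_sym23 pd3_Ftilde_iN ?mulr0.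
Qed.

End ThirdDerivativesOfFtilde.

Lemma quasihom_Ftilde (R : realType) n (eta : 'M[R]_n) (F : 'rV[R]_n -> R)
    (d : 'I_n -> R) (dF c : R) :
  quasihom F d dF -> (forall a b, eta a b != 0 -> d a + d b = c) ->
  forall dt : 'I_n.+2 -> R, dt (i0 n) = dF - c -> dt (iN n) = 2 * c - dF ->
  (forall a, dt (iL a) = d a) -> quasihom (Ftilde eta F) dt dF.
Proof.
move=> F_qh d_eta dt dt0 dtN dtL lam x lam_gt0.
have powRD r s : lam `^ (r + s) = lam `^ r * lam `^ s.
  by rewrite powRD // (gt_eqF lam_gt0) implybT.
set y := \row_i (lam `^ dt i * x 0 i).
have yE k : y 0 k = lam `^ dt k * x 0 k by rewrite mxE.
rewrite /Ftilde.
have -> : proj_mid y = \row_i (lam `^ d i * proj_mid x 0 i).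
  by apply/matrixP => i j; rewrite !mxE dtL.
rewrite F_qh // !yE dt0 dtN; under eq_bigr do under eq_bigr do rewrite !yE !dtL.
have eta_term a b :
    eta a b * (lam `^ d a * x 0 (iL a)) * (lam `^ d b * x 0 (iL b)) *
      (lam `^ (dF - c) * x 0 (i0 n)) =
    lam `^ dF * (eta a b * x 0 (iL a) * x 0 (iL b) * x 0 (i0 n)).
  have [->|eta_ab_neq0] := eqVneq (eta a b) 0; first by rewrite !(mul0r, mulr0).
  rewrite (_ : lam `^ dF = lam `^ d a * lam `^ d b * lam `^ (dF - c)); first by ring.
  by rewrite -!powRD d_eta //; congr (_ `^ _); ring.
under eq_bigr do under eq_bigr do rewrite eta_term.
under eq_bigr do rewrite -mulr_sumr.
rewrite -mulr_sumr (_ : lam `^ dF = lam `^ (dF - c) * lam `^ (dF - c) * lam `^ (2 * c - dF)).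
  by ring.
by rewrite -!powRD; congr (_ `^ _); ring.
Qed.

Unset Implicit Arguments.

Theorem lemma3 (R : realType) (n : nat) (eta : 'M[R]_n) (F : 'rV[R]_n -> R)
  (eta_sym : eta^T = eta) (eta_inv : eta \in unitmx)
  (F_diff : forall x, differentiable F x)
  (F_diff1 : forall (i : 'I_n) x, differentiable (pd i F) x)
  (F_diff2 : forall (i j : 'I_n) x, differentiable (pd i (pd j F)) x)
  (F_assoc : assoc_eqs eta F) :
  assoc_eqs (etatilde eta) (Ftilde eta F) /\
  (forall (x : 'rV[R]_n.+2) (i j k p : 'I_n.+2),
     \sum_(m < n.+2) cstr eta F x m i j * cstr eta F x p m k =
     \sum_(m < n.+2) cstr eta F x m j k * cstr eta F x p i m) /\
  (forall (x : 'rV[R]_n.+2) (k j : 'I_n.+2),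
     cstr eta F x k (i0 n) j = (if k == j then 1 else 0)) /\
  (forall (x : 'rV[R]_n.+2) (k : 'I_n.+2), cstr eta F x k (iN n) (iN n) = 0) /\
  (forall (d : 'I_n -> R) (dF c : R),
     quasihom F d dF ->
     (forall a b : 'I_n, eta a b != 0 -> d a + d b = c) ->
     forall dt : 'I_n.+2 -> R,
       dt (i0 n) = dF - c -> dt (iN n) = 2 * c - dF ->
       (forall a : 'I_n, dt (iL a) = d a) ->
       quasihom (Ftilde eta F) dt dF).
Proof.
split; first exact: assoc_eqs_Ftilde.
split; first exact: cstr_assoc.
split; first exact: cstr_unit.
split; first exact: cstr_iN_iN.
exact: quasihom_Ftilde.
Qed.
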